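(* Let $N,k,s,d$ be positive integers with $s\ge3$, and let $N\ge s+1$ be a prime number. Let $\Lambda\subseteq\mathbb{Z}_N$ belong to the family $\Lambda_d(2k,s)$. Then $$T_k(\Lambda)\le 2^{9k}k^k|\Lambda|^k(s+1)^{2d}\cdot 2^{\frac{2sk(\log k)^2}{\log(k^{2s}|\Lambda|^{s-2})}}.$$
   Context: $\mathbb{Z}_N=\mathbb{Z}/N\mathbb{Z}$; $\log$ is the logarithm to base $2$. For $B\subseteq\mathbb{Z}_N$, $T_k(B)=|\{(r_1,\dots,r_k,r_1',\dots,r_k')\in B^{2k}: r_1+\dots+r_k=r_1'+\dots+r_k'\}|$. Family $\Lambda_d(k,s)$ (for positive integers $k,s,d$): a set $\Lambda=\{\lambda_1,\dots,\lambda_m\}\subseteq\mathbb{Z}_N$ with $\Lambda\cap(-\Lambda)=\emptyset$ belongs to $\Lambda_d(k,s)$ if for every choice of integer vectors $\vec v_1=(v_1^{(1)},\dots,v_1^{(d)}),\dots,\vec v_m=(v_m^{(1)},\dots,v_m^{(d)})\in\mathbb{Z}^d$ with $|v_j^{(i)}|\le s$ for all $i,j$ and $\sum_{j=1}^m|v_j^{(i)}|\le k$ for every $i\in[d]$, satisfying $\lambda_1\vec v_1+\dots+\lambda_m\vec v_m\equiv0\pmod N$ (componentwise), the $d\times m$ matrix $(v_j^{(i)})_{i\in[d],j\in[m]}$ has rank at most $d-1$ (rank of an integer matrix taken over $\mathbb{Q}$). *)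

From HB Require Import structures.
From mathcomp Require Import all_boot all_order all_algebra.
From mathcomp Require Import reals exp.
Set Implicit Arguments. Unset Strict Implicit. Unset Printing Implicit Defensive.
Import Order.TTheory GRing.Theory Num.Theory.
Local Open Scope ring_scope.

Definition Tk (N k : nat) (B : {set 'Z_N}) : nat :=
  #|[set p : {ffun 'I_k -> 'Z_N} * {ffun 'I_k -> 'Z_N} |
      [forall i, (p.1 i \in B) && (p.2 i \in B)] &&
      (\sum_(i < k) p.1 i == \sum_(i < k) p.2 i)]|%N.

(* Lambda in Lambda_d(k,s): Lambda ∩ (-Lambda) = ∅, and for every integer
   d x m matrix V (column j = vector v_j attached to lambda_j, the j-th
   element of an enumeration of Lambda) with |entries| <= s, row l1-norms
   <= k and sum_j lambda_j v_j = 0 in Z_N componentwise, rank_Q V <= d-1. *)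
Definition in_Lambda_d (N d k s : nat) (L : {set 'Z_N}) : Prop :=
  [disjoint L & [set - x | x in L]] /\
  forall V : 'M[int]_(d, #|L|),
    (forall i j, `|V i j| <= s%:Z) ->
    (forall i, \sum_(j < #|L|) `|V i j| <= k%:Z) ->
    (forall i, \sum_(j < #|L|) (@enum_val _ (mem L) j) *~ V i j = 0) ->
    (\rank (map_mx (fun z : int => z%:~R : rat) V) <= d.-1)%N.

Definition log2 {R : realType} (x : R) : R := ln x / ln 2.

(* Let T(A) be the energy of the vectors r : 'I_k -> Z_N supported on A with
   entries in L (the equal-sum pairs among them), and split these vectors into
   good ones, in which no value occurs more than s times, and bad ones; by
   Cauchy-Schwarz T(A) is at most twice the sum of the energies of the two
   parts. Two good vectors with equal sums have multiplicity profiles (over L)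
   differing by an integer relation v with |v_j| <= s, |v|_1 <= 2k and sum_j
   lambda_j v_j = 0. Membership in Lambda_d(2k, s) says that all such relations
   span a space of rank at most d - 1, so they are determined by d - 1
   coordinates and there are at most (2s+1)^(d-1) of them; a profile is
   realised by at most k^|A| vectors. A bad vector is constant, equal to some
   x, on a set P of s + 1 coordinates; subtracting x on P yields a vector
   supported on A minus P, and Cauchy-Schwarz bounds the bad energy by T of
   such smaller supports. Induction on |A| gives T(A) <= 2 4^n |Rel| (|L| k)^n
   rho^(n / (s+1)) with n = |A| and rho = max(1, k^(s+1) / |L|^(s-1)), and
   taking logarithms turns rho^(k / (s+1)) into the power of 2 of the
   statement. *)

From HB Require Import structures.
From mathcomp Require Import all_boot all_order all_algebra.
From mathcomp Require Import reals exp.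
From mathcomp Require Import zify ring lra.
Import Order.TTheory GRing.Theory Num.Theory.

Set Implicit Arguments.
Unset Strict Implicit.
Unset Printing Implicit Defensive.

Lemma mul2n_leq_sqr a b : 2 * (a * b) <= a * a + b * b.
Proof. have [AGM _] := nat_AGM2 a b; nia. Qed.

Lemma leq_expn2r m n e : m <= n -> m ^ e <= n ^ e.
Proof. by move=> le_mn; elim: e => // e IHe; rewrite !expnS leq_mul. Qed.

Lemma bin_leq_expn n k : 'C(n, k) <= n ^ k.
Proof.
rewrite (leq_trans (leq_pmulr _ (fact_gt0 k))) // bin_ffact ffact_prod.
by rewrite -[k in n ^ k]card_ord -prod_nat_const leq_prod // => i _; rewrite leq_subr.
Qed.

Lemma leq_card_bigcup (I T : finType) (P : {pred I}) (Y : I -> {set T}) :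
  #|\bigcup_(i in P) Y i| <= \sum_(i in P) #|Y i|.
Proof.
elim/big_rec2: _ => [|i n Z _ leZn]; first by rewrite cards0.
by rewrite (leq_trans (leq_card_setU _ _).1) ?leq_add2l.
Qed.

Lemma exists_subset_card (T : finType) (B : {set T}) k :
  k <= #|B| -> exists2 P : {set T}, P \subset B & #|P| = k.
Proof.
move=> le_kB; have : 0 < #|[set P : {set T} | P \subset B & #|P| == k]|.
  by rewrite cards_draws bin_gt0.
by case/card_gt0P => P; rewrite inE => /andP[sPB /eqP cardP]; exists P.
Qed.

Lemma card_set_ord_leq n (A : {set 'I_n}) : #|A| <= n.
Proof. by rewrite -[X in _ <= X]card_ord max_card. Qed.

Section RankLemmas.
Variable F : fieldType.
Local Open Scope ring_scope.

Lemma row_free_rowsub m n p (h : 'I_p -> 'I_m) (B : 'M[F]_(m, n)) :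
  injective h -> row_free B -> row_free (rowsub h B).
Proof.
move=> h_inj freeB; apply: inj_row_free => v; rewrite rowsubE mulmxA => vB0.
have /rowP v0 : v *m rowsub h 1%:M = 0 by apply: (row_free_inj freeB); rewrite vB0 mul0mx.
apply/rowP => i; have := v0 (h i); rewrite !mxE (bigD1 i) //= !mxE eqxx mulr1.
by rewrite big1 ?addr0 // => k ne_ki; rewrite !mxE (inj_eq h_inj) (negbTE ne_ki) mulr0.
Qed.

Lemma mxrank_leq_rowsub m n d (M : 'M[F]_(m, n)) : (0 < d)%N ->
  (forall g : 'I_d -> 'I_m, \rank (rowsub g M) <= d.-1)%N -> (\rank M <= d.-1)%N.
Proof.
move=> d_gt0 rank_rowsub; rewrite leqNgt prednK //; apply/negP => le_dM.
have /eqP rank_d : row_free (rowsub (widen_ord le_dM) (rowsub (maxrankfun M) M)).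
  by apply: row_free_rowsub (maxrowsub_free M) => i j /(congr1 val)/= /val_inj.
have := rank_rowsub (maxrankfun M \o widen_ord le_dM).
by rewrite rowsub_comp rank_d leqNgt ltn_predL d_gt0.
Qed.

Lemma eq_row_on_maxcols m n (M : 'M[F]_(m, n)) :
  exists c : 'I_(\rank M) -> 'I_n,
    forall i1 i2, (forall l, M i1 (c l) = M i2 (c l)) -> row i1 M = row i2 M.
Proof.
rewrite -[\rank M]mxrank_tr; exists (maxrankfun M^T) => i1 i2 eq_c.
have /submxP[Z eqM] : (M^T <= rowsub (maxrankfun M^T) M^T)%MS by rewrite eq_maxrowsub.
have Mij i j : M i j = \sum_l Z j l * M i (maxrankfun M^T l).
  by have /matrixP/(_ j i) := eqM; rewrite !mxE => ->; apply: eq_bigr => l _; rewrite !mxE.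
by apply/rowP => j; rewrite !mxE !Mij; apply: eq_bigr => l _; rewrite eq_c.
Qed.

End RankLemmas.

Section Energy.
Variables (U : finType) (G : finZmodType) (f : U -> G).
Implicit Types (X Y : {set U}) (c x : G).

Definition energy X Y c := #|[set p in setX X Y | (f p.1 + c == f p.2)%R]|.
Definition level X x := #|[set u in X | f u == x]|.

Lemma energyE X Y c : energy X Y c = \sum_x level X x * level Y (x + c)%R.
Proof.
rewrite /energy -sum1_card (partition_big (fun p => f p.1) xpredT) //=.
apply: eq_bigr => x _; rewrite sum1_card -cardsX; apply: eq_card => -[u v].
rewrite unfold_in /= !inE; case: (f u =P x) => [<-|]; last by rewrite !andbF.
by rewrite andbT eq_sym; case: (u \in X).
Qed.

Lemma energy_leq_card X Y c : energy X Y c <= #|X| * #|Y|.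
Proof. by rewrite -cardsX; apply/subset_leq_card/subsetP => p; rewrite inE => /andP[]. Qed.

Lemma leq_energy_mean X Y c : 2 * energy X Y c <= energy X X 0%R + energy Y Y 0%R.
Proof.
rewrite !energyE big_distrr [X in _ <= _ + X](reindex_inj (addIr c)) -big_split /=.
by apply: leq_sum => x _; rewrite !addr0 mul2n_leq_sqr.
Qed.

Lemma level_setID X Y x : level X x = level (X :&: Y) x + level (X :\: Y) x.
Proof.
rewrite /level -(cardsID Y); congr (_ + _); apply: eq_card => u; rewrite !inE;
  by case: (u \in Y); case: (u \in X); rewrite ?andbT ?andbF.
Qed.

Lemma energy_setID X Y :
  energy X X 0%R <= 2 * energy (X :&: Y) (X :&: Y) 0%R + 2 * energy (X :\: Y) (X :\: Y) 0%R.
Proof.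
rewrite !energyE !big_distrr -big_split /=; apply: leq_sum => x _.
rewrite addr0 (level_setID X Y x); have := mul2n_leq_sqr (level (X :&: Y) x) (level (X :\: Y) x).
lia.
Qed.

End Energy.

Section SupportedVectors.
Variables (G : finZmodType) (L : {set G}) (K : nat).
Local Notation vec := {ffun 'I_K -> G}.
Implicit Types (A P : {set 'I_K}) (r : vec) (x : G).

Definition sumv r : G := (\sum_i r i)%R.
Definition Lvec A : {set vec} := [set r | r \in pffun_on 0%R A L].
Definition mult A r x := #|[set i in A | r i == x]|.

Lemma LvecP A r :
  reflect ((forall i, i \in A -> r i \in L) /\ (forall i, i \notin A -> r i = 0%R))
          (r \in Lvec A).
Proof.
rewrite inE; apply: (iffP pffun_onP) => [[suppA imL]|[inL out0]]; split.
- by move=> i iA; apply: imL; apply: image_f.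
- by move=> i; apply: contraNeq => ri0; apply: (subsetP suppA); rewrite unfold_in.
- by apply/subsetP => i; rewrite unfold_in /=; apply: contraR => /out0 ->.
- by move=> _ /imageP[i iA ->]; apply: inL.
Qed.

Lemma card_Lvec A : #|Lvec A| = #|L| ^ #|A|.
Proof. by rewrite cardsE card_pffun_on. Qed.

Lemma sumv_Lvec A r : r \in Lvec A -> sumv r = (\sum_(i in A) r i)%R.
Proof.
case/LvecP=> _ out0; rewrite /sumv [RHS]big_mkcond; apply: eq_bigr => i _.
by case: ifPn => // /out0.
Qed.

Lemma sum_Lvec_mult (V : nmodType) (h : G -> V) A r : r \in Lvec A ->
  (\sum_(i in A) h (r i) = \sum_(x in L) h x *+ mult A r x)%R.
Proof.
case/LvecP=> inL _; rewrite (partition_big r (mem L)) //=.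
apply: eq_bigr => x _; rewrite -sumr_const; apply: eq_big => [i|i /andP[_ /eqP-> //]].
by rewrite inE.
Qed.

Lemma sum_mult_Lvec A r : r \in Lvec A -> \sum_(x in L) mult A r x = #|A|.
Proof.
move=> rA; rewrite -sum1_card (sum_Lvec_mult (fun=> 1) rA).
by apply: eq_bigr => x _; rewrite natn.
Qed.

Section SameMultiplicities.
Variables (A : {set 'I_K}) (r0 : vec).

Definition same_mult : {set vec} :=
  [set r in Lvec A | [forall x in L, mult A r x == mult A r0 x]].

Lemma same_mult_values r i : r \in same_mult -> i \in A -> exists2 j, j \in A & r0 j = r i.
Proof.
case/setIdP=> /LvecP[inL _] /forall_inP eq_mult iA.
have : 0 < mult A r0 (r i).
  by rewrite -(eqP (eq_mult _ (inL i iA))); apply/card_gt0P; exists i; rewrite inE iA /=.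
by case/card_gt0P => j; rewrite inE => /andP[jA /eqP]; exists j.
Qed.

Lemma card_same_mult : #|same_mult| <= #|A| ^ #|A|.
Proof.
pose tau r : {ffun 'I_K -> option 'I_K} :=
  [ffun i => if i \in A then [pick j in A | r0 j == r i] else None].
have tauE r i : r \in same_mult -> i \in A ->
    exists j, [/\ tau r i = Some j, j \in A & r0 j = r i].
  move=> rS iA; rewrite ffunE iA; case: pickP => [j /andP[jA /eqP]|none]; first by exists j.
  by have [j jA r0j] := same_mult_values rS iA; move: (none j); rewrite jA r0j eqxx.
have tau_inj : {in same_mult &, injective tau}.
  move=> r r' rS r'S eq_tau; apply/ffunP => i; have [iA|iNA] := boolP (i \in A).
    have [j [tau_j _ <-]] := tauE r i rS iA; have [j' [tau_j' _ <-]] := tauE r' i r'S iA.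
    by move: tau_j'; rewrite -eq_tau tau_j => -[->].
  by case/setIdP: rS => /LvecP[_ ->] // _; case/setIdP: r'S => /LvecP[_ ->].
rewrite -(card_in_imset tau_inj) -[X in _ <= X ^ _](card_imset _ (@Some_inj _)).
rewrite -(card_pffun_on None) -[#|pffun_on _ _ _|]cardsE; apply: subset_leq_card.
apply/subsetP => _ /imsetP[r rS ->]; rewrite inE; apply/pffun_onP; split.
  by apply/subsetP => i; rewrite unfold_in ffunE; case: (i \in A); rewrite ?eqxx.
by move=> _ /imageP[i iA ->]; have [j [-> jA _]] := tauE r i rS iA; rewrite imset_f.
Qed.

End SameMultiplicities.
End SupportedVectors.

Arguments sumv {G K} r.

Section Relations.
Variables (G : finZmodType) (L : {set G}) (K s : nat).
Local Open Scope ring_scope.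
Local Notation lam j := (@enum_val _ (mem L) j).
Local Notation rvec := {ffun 'I_#|L| -> 'I_(2 * s).+1}.

(* An integer vector in [-s, s]^#|L| is stored shifted by s, so that these
   vectors form a finite type. *)
Definition centered (w : rvec) j : int := (w j)%:Z - s%:Z.

Definition relations : {set rvec} :=
  [set w | (\sum_j `|centered w j| <= (2 * K)%:Z) && (\sum_j lam j *~ centered w j == 0)].

Lemma centered_bound w j : `|centered w j| <= s%:Z.
Proof. by rewrite /centered; have := ltn_ord (w j); lia. Qed.

End Relations.

Section RelationCount.
Local Open Scope ring_scope.

Lemma card_relations N d K s (L : {set 'Z_N}) : in_Lambda_d d (2 * K) s L -> (0 < d)%N ->
  (#|relations L K s| <= (2 * s).+1 ^ d.-1)%N.
Proof.
move=> [_ rank_le] d_gt0; set S := relations L K s.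
pose M : 'M[int]_(#|S|, #|L|) := \matrix_(i, j) centered (enum_val i) j.
pose Mq := map_mx (fun z : int => z%:~R : rat) M.
have rankMq : (\rank Mq <= d.-1)%N.
  apply: mxrank_leq_rowsub => // g; rewrite -map_mxsub; apply: rank_le => i;
    have rowE j : rowsub g M i j = centered (enum_val (g i)) j by rewrite !mxE.
  - by move=> j; rewrite rowE centered_bound.
  - by under eq_bigr do rewrite rowE; have := enum_valP (g i); rewrite inE => /andP[].
  - by under eq_bigr do rewrite rowE; have := enum_valP (g i); rewrite inE => /andP[_ /eqP].
have [c eq_row] := eq_row_on_maxcols Mq.
pose phi (w : {ffun 'I_#|L| -> 'I_(2 * s).+1}) := [ffun l => w (c l)].
have phi_inj : {in S &, injective phi}.
  move=> w1 w2 w1S w2S /ffunP eq_phi; pose rk := enum_rank_in w1S.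
  have MqE w j : w \in S -> Mq (rk w) j = (centered w j)%:~R.
    by move=> wS; rewrite !mxE enum_rankK_in.
  have /rowP eq_w : row (rk w1) Mq = row (rk w2) Mq.
    by apply: eq_row => l; rewrite !MqE // /centered; move: (eq_phi l); rewrite !ffunE => ->.
  apply/ffunP => j; apply/val_inj; have := eq_w j.
  rewrite !mxE (enum_rankK_in w1S w1S) (enum_rankK_in w1S w2S) => /eqP.
  by rewrite eqr_int /centered => /eqP /addIr [].
rewrite -(card_in_imset phi_inj); apply: leq_trans (max_card _) _.
by rewrite card_ffun !card_ord leq_pexp2l.
Qed.

End RelationCount.

Section GoodVectors.
Variables (G : finZmodType) (L : {set G}) (K s : nat).
Local Notation vec := {ffun 'I_K -> G}.
Local Notation lam j := (@enum_val _ (mem L) j).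
Implicit Types (A : {set 'I_K}) (r : vec).
Local Open Scope ring_scope.

Definition good A : {set vec} := [set r | [forall x, mult A r x <= s]%N].

Definition relation_fiber A r (w : {ffun 'I_#|L| -> 'I_(2 * s).+1}) : {set vec} :=
  [set r' in Lvec L A |
    [forall j, (mult A r' (lam j))%:Z == (mult A r (lam j))%:Z - centered w j]].

Lemma good_pair_relation A r r' :
  r \in Lvec L A :&: good A -> r' \in Lvec L A :&: good A -> sumv r = sumv r' ->
  exists2 w, w \in relations L K s & r' \in relation_fiber A r w.
Proof.
case/setIP=> rA; rewrite inE => /forallP r_good /setIP[r'A]; rewrite inE => /forallP r'_good eq_sum.
pose w : {ffun 'I_#|L| -> 'I_(2 * s).+1} :=
  [ffun j => inord (mult A r (lam j) + (s - mult A r' (lam j)))].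
have wE j : centered w j = (mult A r (lam j))%:Z - (mult A r' (lam j))%:Z.
  have := r_good (lam j); have := r'_good (lam j); rewrite /centered ffunE => le_r' le_r.
  by rewrite inordK; lia.
exists w; last by rewrite inE r'A; apply/forallP => j; rewrite wE; apply/eqP; lia.
have Posz_sum (F : 'I_#|L| -> nat) : \sum_j (F j)%:Z = (\sum_j F j)%N%:Z.
  by rewrite (big_morph Posz PoszD (erefl _)).
rewrite inE; apply/andP; split.
  under eq_bigr do rewrite wE.
  apply: (@le_trans _ _ (\sum_j ((mult A r (lam j))%:Z + (mult A r' (lam j))%:Z))).
    by apply: ler_sum => j _; lia.
  rewrite big_split /= !Posz_sum -!(big_enum_val (fun x => mult A _ x)).
  rewrite !sum_mult_Lvec //; have := card_set_ord_leq A; lia.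
under eq_bigr do rewrite wE mulrzBl_nat.
rewrite sumrB -!(big_enum_val (fun x => x *+ mult A _ x)).
by rewrite -!sum_Lvec_mult // -(sumv_Lvec rA) -(sumv_Lvec r'A) eq_sum subrr.
Qed.

Lemma card_relation_fiber A r w : (#|relation_fiber A r w| <= K ^ #|A|)%N.
Proof.
have [-> | [r0 r0F]] := set_0Vmem (relation_fiber A r w); first by rewrite cards0.
apply: leq_trans (leq_expn2r _ (card_set_ord_leq A)).
apply: leq_trans (card_same_mult L A r0); apply/subset_leq_card/subsetP => r' r'F.
case/setIdP: r'F r0F => r'A /forallP r'_fib /setIdP[_ /forallP r0_fib].
rewrite inE r'A; apply/forall_inP => x xL; rewrite -(enum_rankK_in xL xL).
have /eqP := r'_fib (enum_rank_in xL x); have /eqP := r0_fib (enum_rank_in xL x).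
by move=> <- [->].
Qed.

Lemma energy_good A :
  (energy sumv (Lvec L A :&: good A) (Lvec L A :&: good A) 0%R
     <= #|relations L K s| * (#|L| ^ #|A| * K ^ #|A|))%N.
Proof.
set X := Lvec L A :&: good A; set Rel := relations L K s.
have cover : [set p in setX X X | sumv p.1 + 0 == sumv p.2]
    \subset \bigcup_(q in setX (Lvec L A) Rel) [set (q.1, r') | r' in relation_fiber A q.1 q.2].
  apply/subsetP => -[r r'] /setIdP[/setXP[rX r'X]] /=; rewrite addr0 => /eqP eq_sum.
  have [w wR r'F] := good_pair_relation rX r'X eq_sum.
  apply/bigcupP; exists (r, w); last exact: imset_f.
  by case/setIP: rX => rA _; apply/setXP.
apply: leq_trans (subset_leq_card cover) _; apply: leq_trans (leq_card_bigcup _ _) _.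
apply: (@leq_trans (\sum_(q in setX (Lvec L A) Rel) K ^ #|A|)).
  by apply: leq_sum => q _; apply: leq_trans (leq_imset_card _ _) (card_relation_fiber _ _ _).
by rewrite sum_nat_const cardsX card_Lvec mulnA (mulnC #|Rel|).
Qed.

Lemma Lvec_sub_good A : (#|A| <= s)%N -> Lvec L A \subset good A.
Proof.
move=> le_As; apply/subsetP => r _; rewrite inE; apply/forallP => x.
by apply: leq_trans (subset_leq_card _) le_As; apply/subsetP => i; rewrite inE => /andP[].
Qed.

End GoodVectors.

Arguments good {G K} s A.

Section BadVectors.
Variables (G : finZmodType) (L : {set G}) (K s : nat).
Local Notation vec := {ffun 'I_K -> G}.
Local Notation E X := (energy sumv X X 0%R).
Implicit Types (A P : {set 'I_K}) (r : vec) (x : G).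

Definition shift P x r : vec := [ffun i => r i - (if i \in P then x else 0)]%R.

Lemma sumv_shift P x r : sumv (shift P x r) = (sumv r - x *+ #|P|)%R.
Proof.
rewrite /sumv /shift; under eq_bigr do rewrite ffunE.
by rewrite sumrB -big_mkcond sumr_const.
Qed.

Lemma shift_Lvec A P x r : P \subset A -> r \in Lvec L A -> [forall i in P, r i == x] ->
  shift P x r \in Lvec L (A :\: P).
Proof.
move=> sPA /LvecP[inL out0] /forall_inP r_x; apply/LvecP; split=> i; rewrite inE ffunE.
  by case/andP=> /negbTE-> iA; rewrite subr0 inL.
rewrite negb_and negbK; have [iP _|iNP /= iNA] := boolP (i \in P).
  by rewrite (eqP (r_x i iP)) subrr.
by rewrite out0 // subr0.
Qed.

Definition bad_pairs A x0 P0 x1 P1 : {set vec * vec} :=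
  [set p in setX (Lvec L A) (Lvec L A) |
    [&& [forall i in P0, p.1 i == x0], [forall i in P1, p.2 i == x1]
      & sumv p.1 + 0 == sumv p.2]%R].

Lemma card_bad_pairs A x0 P0 x1 P1 : P0 \subset A -> P1 \subset A ->
  2 * #|bad_pairs A x0 P0 x1 P1| <= E (Lvec L (A :\: P0)) + E (Lvec L (A :\: P1)).
Proof.
move=> sP0A sP1A; pose phi (p : vec * vec) := (shift P0 x0 p.1, shift P1 x1 p.2).
have phi_inj : injective phi.
  move=> [r0 r1] [r0' r1'] [/ffunP eq0 /ffunP eq1]; congr (_, _); apply/ffunP => i.
    by have := eq0 i; rewrite !ffunE => /addIr.
  by have := eq1 i; rewrite !ffunE => /addIr.
apply: leq_trans (leq_energy_mean _ _ _ (x0 *+ #|P0| - x1 *+ #|P1|)%R).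
rewrite leq_mul2l /= -(card_imset _ phi_inj); apply: subset_leq_card.
apply/subsetP => _ /imsetP[[r0 r1] /setIdP[/setXP[r0A r1A] /and3P[r0_x0 r1_x1 eq_sum]] ->].
apply/setIdP; split; first by apply/setXP; split; apply: shift_Lvec.
by rewrite /= !sumv_shift -(eqP eq_sum) !addr0 addrA subrK.
Qed.

Local Notation draws A k := [set P : {set 'I_K} | P \subset A & #|P| == k].

Lemma card_draws_leq A k : #|draws A k| <= K ^ k.
Proof.
by rewrite cards_draws (leq_trans (bin_leq_expn _ _)) // leq_expn2r // card_set_ord_leq.
Qed.

Lemma not_good_const A r : r \in Lvec L A -> r \notin good s A ->
  exists2 q : G * {set 'I_K}, q \in setX L (draws A s.+1) & [forall i in q.2, r i == q.1].
Proof.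
case/LvecP=> inL _; rewrite inE negb_forall => /existsP[x]; rewrite -ltnNge => lt_s_mult.
have [P sPx cardP] := exists_subset_card lt_s_mult.
have [i iP] : exists i, i \in P by apply/set0Pn; rewrite -card_gt0 cardP.
have /setIdP[iA /eqP ri] := subsetP sPx i iP.
exists (x, P); last by apply/forall_inP => j /(subsetP sPx); rewrite inE => /andP[].
rewrite !inE -ri inL //= cardP eqxx andbT; apply: subset_trans sPx _.
by apply/subsetP => j; rewrite inE => /andP[].
Qed.

Lemma energy_not_good A :
  E (Lvec L A :\: good s A) <= \sum_(q in setX (setX L (draws A s.+1)) (setX L (draws A s.+1)))
                                  #|bad_pairs A q.1.1 q.1.2 q.2.1 q.2.2|.
Proof.
apply: leq_trans (leq_card_bigcup _ _); apply/subset_leq_card/subsetP => -[r0 r1].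
case/setIdP=> /setXP[/setDP[r0A r0B] /setDP[r1A r1B]] eq_sum.
have [q0 q0D r0_q0] := not_good_const r0A r0B; have [q1 q1D r1_q1] := not_good_const r1A r1B.
apply/bigcupP; exists (q0, q1); first exact/setXP.
by rewrite inE /= r0_q0 r1_q1 eq_sum !andbT in_setX r0A.
Qed.

End BadVectors.

Section EnergyBound.
Variables (R : realFieldType) (G : finZmodType) (L : {set G}) (K s : nat) (rho : R).
Local Notation m := #|L|.
Local Notation nrel := #|relations L K s|.
Local Notation E X := (energy sumv X X 0%R).
Local Open Scope ring_scope.

Hypotheses (s_gt0 : (0 < s)%N) (m_gt0 : (0 < m)%N) (rho_ge1 : 1 <= rho)
  (K_small : (K ^ s.+1)%:R <= rho * (m ^ (s - 1))%:R).

Lemma sqr_le_rho : ((m * K ^ s.+1) ^ 2)%:R <= rho * ((m * K) ^ s.+1)%:R.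
Proof.
have -> : ((m * K ^ s.+1) ^ 2 = m ^ 2 * K ^ s.+1 * K ^ s.+1)%N by ring.
have -> : ((m * K) ^ s.+1 = m ^ 2 * K ^ s.+1 * m ^ (s - 1))%N.
  have e : (s.+1 = 2 + (s - 1))%N by lia.
  by rewrite expnMn {1}e expnD; ring.
by rewrite [X in X <= _]natrM [X in _ <= _ * X]natrM mulrCA ler_wpM2l.
Qed.

Definition energy_bound n : R :=
  (2 * 4 ^ n * nrel * (m * K) ^ n)%:R * rho ^+ (n %/ s.+1).

Lemma energy_bound_ge n : (2 * nrel * (m * K) ^ n)%:R <= energy_bound n.
Proof.
apply: le_trans (ler_peMr _ (exprn_ege1 _ rho_ge1)) => //; rewrite ler_nat.
rewrite (_ : 2 * 4 ^ n * nrel * (m * K) ^ n = 4 ^ n * (2 * nrel * (m * K) ^ n))%N; last by ring.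
by rewrite leq_pmull // expn_gt0.
Qed.

Lemma energy_bound_rec n :
  (2 * nrel * (m * K) ^ (n + s.+1))%:R + 2 * ((m * K ^ s.+1) ^ 2)%:R * energy_bound n
    <= energy_bound (n + s.+1).
Proof.
have q_rec : ((n + s.+1) %/ s.+1 = (n %/ s.+1).+1)%N by rewrite divnDr // divnn addn1.
have sqrQ := sqr_le_rho; set S := ((m * K ^ s.+1) ^ 2)%:R in sqrQ *.
rewrite /energy_bound q_rec exprS !expnD !natrM.
set y := nrel%:R; set f := (4 ^ n)%:R; set c := (4 ^ s.+1)%:R; set P := ((m * K) ^ n)%:R.
set Q := ((m * K) ^ s.+1)%:R; set r := rho ^+ _.
have [y0 P0 Q0 S0] : [/\ 0 <= y, 0 <= P, 0 <= Q & 0 <= S] by split; apply: ler0n.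
have f1 : 1 <= f by rewrite ler1n expn_gt0.
have c4 : 4 <= c by rewrite (ler_nat R 4) expnS leq_pmulr ?expn_gt0.
have r1 : 1 <= r := exprn_ege1 _ rho_ge1.
set Z := y * P * Q * (f * r * rho).
have Z0 : 0 <= Z by rewrite !mulr_ge0 // (le_trans ler01).
have yPQ_le : y * P * Q <= Z.
  by rewrite ler_peMr ?mulr_ge0 // -[1]mul1r ler_pM ?(le_trans ler01) // -[1]mul1r ler_pM.
have SPr_le : S * (f * y * P * r) <= Z.
  have -> : Z = rho * Q * (f * y * P * r) by rewrite /Z; ring.
  by rewrite ler_wpM2r // !mulr_ge0 // (le_trans ler01).
have -> : 2 * (f * c) * y * (P * Q) * (rho * r) = 2 * c * Z by rewrite /Z; ring.
have -> : 2 * y * (P * Q) + 2 * S * (2 * f * y * P * r)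
          = 2 * (y * P * Q) + 4 * (S * (f * y * P * r)) by ring.
nra.
Qed.

Lemma energy_bound_ge0 n : 0 <= energy_bound n.
Proof. exact: le_trans (ler0n _ _) (energy_bound_ge n). Qed.

Lemma energy_not_good_le (A : {set 'I_K}) n : #|A| = (n + s.+1)%N ->
  (forall B : {set 'I_K}, #|B| = n -> (E (Lvec L B))%:R <= energy_bound n) ->
  (E (Lvec L A :\: good s A))%:R <= ((m * K ^ s.+1) ^ 2)%:R * energy_bound n.
Proof.
move=> cardA IH; have := energy_not_good L s A; rewrite -(ler_nat R) => /le_trans; apply.
rewrite natr_sum; set Idx := setX _ _.
have bad_le q : q \in Idx -> #|bad_pairs L A q.1.1 q.1.2 q.2.1 q.2.2|%:R <= energy_bound n.
  case: q => [[x0 P0] [x1 P1]]; rewrite !inE /= => /andP[/andP[_ /andP[sP0A /eqP cardP0]]].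
  case/andP=> _ /andP[sP1A /eqP cardP1].
  have cardD (P : {set 'I_K}) : P \subset A -> #|P| = s.+1 -> #|A :\: P| = n.
    by move=> sPA cardP; rewrite cardsD (setIidPr sPA) cardA cardP addnK.
  have := card_bad_pairs L x0 x1 sP0A sP1A.
  rewrite -(ler_nat R) natrM natrD.
  have := IH _ (cardD _ sP0A cardP0); have := IH _ (cardD _ sP1A cardP1); lra.
apply: le_trans (ler_sum _ bad_le) _; rewrite sumr_const -(mulr_natl (energy_bound n)).
apply: (ler_wpM2r (energy_bound_ge0 n)).
by rewrite ler_nat !cardsX mulnn leq_mul // leq_mul // card_draws_leq.
Qed.

Lemma energy_Lvec_le (A : {set 'I_K}) : (E (Lvec L A))%:R <= energy_bound #|A|.
Proof.
suff {A} IHn n (B : {set 'I_K}) : #|B| = n -> (E (Lvec L B))%:R <= energy_bound n by exact: IHn.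
elim/ltn_ind: n B => n IH A cardA.
have E_good := energy_good L s A; rewrite cardA -expnMn in E_good.
have [le_ns | lt_sn] := leqP n s.
  have le_As : (#|A| <= s)%N by rewrite cardA.
  rewrite -(setIidPl (Lvec_sub_good L le_As)).
  apply: le_trans (energy_bound_ge n); rewrite ler_nat -mulnA.
  exact: leq_trans E_good (leq_pmull _ _).
have [n' def_n] : exists n', n = (n' + s.+1)%N by exists (n - s.+1)%N; rewrite subnK.
have lt_n'n : (n' < n)%N by rewrite def_n addnS ltnS leq_addr.
have E_bad := energy_not_good_le (etrans cardA def_n) (IH n' lt_n'n).
rewrite def_n in E_good *; apply: le_trans _ (energy_bound_rec n').
have := energy_setID sumv (Lvec L A) (good s A); rewrite -(ler_nat R) !natrD !natrM.
move: E_good; rewrite -(ler_nat R) !natrM; lra.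
Qed.

End EnergyBound.

(* The sums in [Tk] are sums in nat of the representatives, so equal sums
   there are in particular equal in 'Z_N. *)
Lemma Tk_leq_energy N k (L : {set 'Z_N}) :
  Tk k L <= energy sumv (Lvec L [set: 'I_k]) (Lvec L [set: 'I_k]) 0%R.
Proof.
apply/subset_leq_card/subsetP => -[r0 r1]; rewrite inE /= => /andP[/forallP inL /eqP eq_sum].
have LvecT (r : {ffun 'I_k -> 'Z_N}) : (forall i, r i \in L) -> r \in Lvec L setT.
  by move=> rL; apply/LvecP; split=> i; rewrite in_setT.
rewrite inE in_setX !LvecT /= => [|i|i]; [|by case/andP: (inL i)..].
have natr_sum (r : {ffun 'I_k -> 'Z_N}) : sumv r = ((\sum_i (r i : nat))%:R)%R.
  by rewrite natr_sum; apply: eq_bigr => i _; rewrite natr_Zp.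
by rewrite addr0 !natr_sum eq_sum.
Qed.

Lemma Tk_eq0 N k (L : {set 'Z_N}) : 0 < k -> #|L| = 0 -> Tk k L = 0.
Proof.
move=> k_gt0 L_eq0; apply/eqP; rewrite -leqn0 (leq_trans (Tk_leq_energy k L)) //.
apply: leq_trans (energy_leq_card _ _ _ _) _.
by rewrite card_Lvec L_eq0 cardsT card_ord exp0n.
Qed.

Lemma energy_bound_constant_leq k m s d nrel : 0 < k -> 0 < d -> nrel <= (2 * s).+1 ^ d.-1 ->
  2 * 4 ^ k * nrel * (m * k) ^ k <= 2 ^ (9 * k) * k ^ k * m ^ k * s.+1 ^ (2 * d).
Proof.
move=> k_gt0 d_gt0 le_nrel.
have rel_le : nrel <= s.+1 ^ (2 * d).
  apply: leq_trans le_nrel _; rewrite expnM.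
  apply: leq_trans (leq_expn2r _ (_ : (2 * s).+1 <= s.+1 ^ 2)) _; first by nia.
  by rewrite leq_pexp2l // leq_pred.
have const_le : 2 * 4 ^ k <= 2 ^ (9 * k).
  by rewrite (_ : 4 = 2 ^ 2) // -expnM -expnS leq_exp2l //; lia.
apply: leq_trans (leq_mul (leq_mul const_le rel_le) (leqnn ((m * k) ^ k))) _.
by apply: eq_leq; rewrite expnMn; ring.
Qed.

Local Open Scope ring_scope.

Lemma log_ratio_mul_le (R : realFieldType) (S a b : R) : 2 <= S -> 0 <= a -> 0 <= b ->
  ((S + 1) * a - (S - 1) * b) * (2 * S * a + (S - 2) * b) <= 2 * S * (S + 1) * a ^+ 2.
Proof.
move=> S2 a0 b0; have ab0 := mulr_ge0 a0 b0; have bb0 := mulr_ge0 b0 b0.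
have : 0 <= (S * S - S + 2) * (a * b) + (S - 1) * (S - 2) * (b * b).
  by rewrite addr_ge0 // mulr_ge0 // ?mulr_ge0; nra.
rewrite expr2; nra.
Qed.

Lemma ln_natX (R : realType) (a n : nat) : (0 < a)%N -> ln ((a ^ n)%:R : R) = n%:R * ln a%:R.
Proof. by move=> a_gt0; rewrite natrX lnXn ?ltr0n // mulr_natl. Qed.

Section FinalEstimate.
Variables (R : realType) (K m s : nat).
Hypotheses (K_gt0 : (0 < K)%N) (m_gt0 : (0 < m)%N) (s_ge3 : (3 <= s)%N).

Let ratio : R := (K ^ s.+1)%:R / (m ^ (s - 1))%:R.
Let E : R := (2 * s * K)%:R * log2 (K%:R : R) ^+ 2 / log2 ((K ^ (2 * s) * m ^ (s - 2))%N%:R).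

Lemma max_ratio_expr_le_powR : Num.max 1 ratio ^+ (K %/ s.+1) <= powR 2 E.
Proof.
have ln2_gt0 : 0 < ln (2 : R) by rewrite ln_gt0 ?ltr1n.
set a := ln (K%:R : R); set b := ln (m%:R : R); set q := (K %/ s.+1)%N.
have a_ge0 : 0 <= a by rewrite ln_ge0 // ler1n.
have b_ge0 : 0 <= b by rewrite ln_ge0 // ler1n.
have S3 : 3 <= s%:R :> R by rewrite (ler_nat R 3).
have natsE : [/\ (s.+1)%:R = s%:R + 1 :> R, (s - 1)%:R = s%:R - 1 :> R,
                 (s - 2)%:R = s%:R - 2 :> R & (2 * s)%:R = 2 * s%:R :> R].
  by rewrite -addn1 natrD !natrB ?natrM //; lia.
have [eS1 eSm1 eSm2 e2S] := natsE.
set D := 2 * s%:R * a + (s%:R - 2) * b.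
have log2D : log2 ((K ^ (2 * s) * m ^ (s - 2))%N%:R : R) = D / ln 2.
  by rewrite /log2 natrM lnM ?posrE ?ltr0n ?expn_gt0 ?K_gt0 ?m_gt0 // !ln_natX // e2S eSm2.
have D_ge0 : 0 <= D by rewrite /D; nra.
have E_ge0 : 0 <= E.
  rewrite /E log2D; apply: divr_ge0; last exact: divr_ge0 D_ge0 (ltW ln2_gt0).
  by rewrite mulr_ge0 ?sqr_ge0.
have rho_gt0 : 0 < Num.max 1 ratio by rewrite lt_max ltr01.
rewrite -ler_ln ?posrE ?exprn_gt0 ?powR_gt0 // lnXn // ln_powR.
have [le_r1 | gt_r1] := lerP ratio 1.
  by rewrite ln1 mul0rn; apply: mulr_ge0 E_ge0 (ltW ln2_gt0).
rewrite -(mulr_natl (ln ratio)).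
have ln_ratio : ln ratio = (s%:R + 1) * a - (s%:R - 1) * b.
  by rewrite ln_div ?posrE ?ltr0n ?expn_gt0 ?K_gt0 ?m_gt0 // !ln_natX // eS1 eSm1.
have a_gt0 : 0 < a by have := ln_gt0 gt_r1; rewrite ln_ratio; nra.
have D_gt0 : 0 < D by rewrite /D; nra.
have -> : E * ln 2 = 2 * s%:R * K%:R * a ^+ 2 / D.
  have [ln2_neq0 D_neq0] := (lt0r_neq0 ln2_gt0, lt0r_neq0 D_gt0).
  by rewrite /E log2D /log2 !natrM -/a; field; apply/andP.
rewrite ler_pdivlMr // -mulrA ln_ratio.
have q_le : q%:R * (s%:R + 1) <= K%:R :> R by rewrite -eS1 -natrM ler_nat leq_divM.
have q_ge0 : 0 <= q%:R :> R := ler0n _ _.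
have LD_le := log_ratio_mul_le (le_trans (ler_nat R 2 3) S3) a_ge0 b_ge0.
rewrite -[X in X <= _]mulrA; apply: le_trans (ler_wpM2l q_ge0 LD_le) _.
rewrite (_ : _ * (2 * _ * _ * _) = q%:R * (s%:R + 1) * (2 * s%:R * a ^+ 2)); last by ring.
rewrite (_ : 2 * _ * (_ * _) = K%:R * (2 * s%:R * a ^+ 2)); last by ring.
by apply: ler_wpM2r q_le; rewrite !mulr_ge0 ?sqr_ge0 // ler0n.
Qed.

End FinalEstimate.

Unset Implicit Arguments.
Set Strict Implicit.
Set Printing Implicit Defensive.

Theorem mainTheorem6 (R : realType) (N k s d : nat) (L : {set 'Z_N}) :
  (0 < k)%N -> (0 < d)%N -> (3 <= s)%N -> prime N -> (s.+1 <= N)%N ->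
  in_Lambda_d d (2 * k) s L ->
  ((Tk k L)%:R : R) <=
    ((2 ^ (9 * k) * k ^ k * #|L| ^ k * s.+1 ^ (2 * d))%N)%:R *
    powR 2 ((2 * s * k)%:R * (log2 (k%:R : R)) ^+ 2 /
            log2 ((k ^ (2 * s) * #|L| ^ (s - 2))%N)%:R).
Proof.
move=> k_gt0 d_gt0 s_ge3 _ _ HL; have s_gt0 : (0 < s)%N by apply: leq_trans s_ge3.
have [L_eq0 | L_gt0] := posnP #|L|.
  by rewrite Tk_eq0 // mulr_ge0 ?powR_ge0.
pose rho : R := Num.max 1 ((k ^ s.+1)%:R / (#|L| ^ (s - 1))%:R).
have rho_ge1 : 1 <= rho by rewrite le_max lexx.
have k_small : (k ^ s.+1)%:R <= rho * (#|L| ^ (s - 1))%:R.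
  by rewrite -ler_pdivrMr ?ltr0n ?expn_gt0 ?L_gt0 // le_max lexx orbT.
have := energy_Lvec_le s_gt0 L_gt0 rho_ge1 k_small [set: 'I_k].
rewrite cardsT card_ord /energy_bound => /(le_trans _) E_le.
apply: le_trans (E_le _ _) _; first by rewrite ler_nat Tk_leq_energy.
apply: ler_pM; rewrite ?ler0n ?exprn_ge0 ?(le_trans ler01) ?max_ratio_expr_le_powR //.
by rewrite ler_nat energy_bound_constant_leq ?card_relations.
Qed.
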